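(* Let $(P_n)_{n\geq 0}$ be the Pell sequence: $P_0=0$, $P_1=1$, $P_{n+1}=2P_n+P_{n-1}$ for $n\geq 1$. Let $k,l,m,n$ be positive integers. Then $P_k+2P_l=P_m+2P_n$ if and only if $k=m$ and $l=n$. *)

From mathcomp Require Import all_boot.

Fixpoint pell (n : nat) : nat :=
  match n with
  | 0 => 0
  | 1 => 1
  | (n'.+1 as m).+1 => 2 * pell m + pell n'
  end.

(* If k < m, then n < l, and comparing growth rates (2 P_j <= P_(j+1))
   forces m = l + 1.  The equation then reduces to P_k = P_(l-1) + 2 P_n,
   which forces k = l, and finally to P_(l-1) + P_(l-2) = 2 P_n, impossible
   because the left side lies strictly between 2 P_(l-2) and 2 P_(l-1).
   Positivity of k matters: P_0 + 2 P_2 = P_2 + 2 P_1. *)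

From mathcomp Require Import all_boot.
From mathcomp Require Import zify.

Lemma pellSS n : pell n.+2 = 2 * pell n.+1 + pell n.
Proof. by []. Qed.

Lemma ltn_pellS n : pell n < pell n.+1.
Proof. by elim: n => [//|n IHn]; rewrite pellSS; lia. Qed.

Lemma leq_pell : {mono pell : i j / i <= j}.
Proof. exact/leq_mono/(homo_ltn ltn_trans ltn_pellS). Qed.

Lemma ltn_pell : {mono pell : i j / i < j}.
Proof. exact: leqW_mono leq_pell. Qed.

Lemma pell_inj : injective pell.
Proof. exact: incn_inj leq_pell. Qed.

Lemma pell_gt0 n : (0 < pell n) = (0 < n).
Proof. exact: (ltn_pell 0 n). Qed.

Lemma leq_double_pellS n : 2 * pell n <= pell n.+1.
Proof. by case: n => [//|n]; rewrite pellSS; lia. Qed.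

Lemma pellS_add_pell_neq_double j n : pell j.+1 + pell j != 2 * pell n.
Proof.
apply/eqP=> e; have lt_jS := ltn_pellS j.
have lt_jn : j < n by rewrite -ltn_pell; lia.
have : n < j.+1 by rewrite -ltn_pell; lia.
by rewrite ltnS leqNgt lt_jn.
Qed.

Lemma pell_sum_lt_of_leq {k l m n} : 0 < k -> m <= l -> n < l ->
  pell m + 2 * pell n < pell k + 2 * pell l.
Proof.
case: l => [//|j] k_gt0 le_mj le_nj.
have := leq_double_pellS j; rewrite -pell_gt0 in k_gt0.
rewrite -leq_pell in le_mj; rewrite ltnS -leq_pell in le_nj; lia.
Qed.

Lemma pell_sum_lt_of_ltn {k l m} : k < m -> l.+2 <= m ->
  pell k + 2 * pell l < pell m.
Proof.
case: m => [|[|i]] //; rewrite !ltnS pellSS => le_ki le_li.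
rewrite -leq_pell in le_ki; rewrite -leq_pell in le_li.
have := ltn_pellS i; lia.
Qed.

Lemma pell_sum_neq {k l m n} : 0 < k -> 0 < n -> k < m -> n < l ->
  pell k + 2 * pell l != pell m + 2 * pell n.
Proof.
move=> k_gt0 n_gt0 lt_km lt_nl; apply/eqP => e.
have m_eq : m = l.+1.
  case: (ltngtP m l.+1) => [le_ml | lt_lm | //].
    rewrite ltnS in le_ml.
    by have := pell_sum_lt_of_leq k_gt0 le_ml lt_nl; rewrite e ltnn.
  by have := pell_sum_lt_of_ltn lt_km lt_lm; lia.
case: l lt_nl e m_eq => [//|j] lt_nj e m_eq; subst m.
have e' : pell k = pell j + 2 * pell n by move: e; rewrite pellSS; lia.
have k_eq : k = j.+1.
  have lt_jk : j < k by rewrite -pell_gt0 in n_gt0; rewrite -ltn_pell; lia.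
  by apply/eqP; rewrite eqn_leq -ltnS lt_km.
subst k; have j_gt0 : 0 < j by lia.
move: e'; rewrite -(prednK j_gt0) pellSS => e'.
by have /eqP := pellS_add_pell_neq_double j.-1 n; lia.
Qed.

Theorem corollary1p1 (k l m n : nat) :
  0 < k -> 0 < l -> 0 < m -> 0 < n ->
  (pell k + 2 * pell l = pell m + 2 * pell n <-> k = m /\ l = n).
Proof.
move=> k_gt0 l_gt0 m_gt0 n_gt0; split; last by case=> -> ->.
wlog le_km : k l m n k_gt0 l_gt0 m_gt0 n_gt0 / k <= m.
  move=> hwlog e; case: (leqP k m) => [le_km | /ltnW le_mk].
    exact: hwlog.
  by case: (hwlog m n k l) => // -> ->.
move=> e; have [eq_km | lt_km] : k = m \/ k < m by lia.
  by subst m; split=> //; apply: pell_inj; lia.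
have lt_nl : n < l by rewrite -ltn_pell in lt_km; rewrite -ltn_pell; lia.
by have /eqP := pell_sum_neq k_gt0 n_gt0 lt_km lt_nl.
Qed.
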